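(* Let $V$ be a real vector space of dimension $n$ and $2\le k\le n-1$. A non-standard isotropic subspace $L\subseteq V\oplus\wedge^kV^*$ always satisfies (C3s), and never satisfies (C3w) or (C1). The properties (C2w) and (C2s) are independent for non-standard isotropic subspaces: there exist non-standard isotropic subspaces satisfying (C2s) but not (C2w), and ones satisfying (C2w) but not (C2s).
   Context: On $V\oplus\wedge^kV^*$ the pairing is $\langle X+\alpha,Y+\beta\rangle=i_X\beta+i_Y\alpha\in\wedge^{k-1}V^*$, with orthogonal $L^\perp$; $L$ is isotropic if $L\subseteq L^\perp$. $\mathrm{pr}_1,\mathrm{pr}_2$ are the projections; $E=\mathrm{pr}_1(L)$, $A_L=L\cap\wedge^kV^*$. For $W\subseteq V$, $\mathrm{Ann}(W)=\{\alpha\in\wedge^kV^*\mid i_Y\alpha=0\ \forall Y\in W\}$; for $S\subseteq\wedge^kV^*$, $S^\circ=\{X\in V\mid i_X\eta=0\ \forall\eta\in S\}$. An isotropic $L$ is non-standard if $\mathrm{Ann}(E)^\circ\neq E$, equivalently $n-k<\dim E<n$. Conditions: (C1) $L=L^\perp$; (C2w) $L\subseteq L^\perp$ and $L\cap V=\mathrm{pr}_2(L)^\circ$; (C2s) $L\subseteq L^\perp$ and $\mathrm{Ann}(L\cap V)=\mathrm{pr}_2(L)$; (C3w) $L\subseteq L^\perp$ and $E=A_L^\circ$; (C3s) $L\subseteq L^\perp$ and $\mathrm{Ann}(E)=A_L$. *)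

From mathcomp Require Import all_boot all_order all_algebra.
From mathcomp Require Import reals.
Set Implicit Arguments. Unset Strict Implicit. Unset Printing Implicit Defensive.
Import GRing.Theory Num.Theory.
Local Open Scope ring_scope.

(* V = R^n is 'rV[R]_n.  A (candidate) k-form on V is a function of k vectors;
   wedge^k V^* is the set of such functions that are multilinear and alternating. *)
Definition form (R : realType) (n k : nat) := ('I_k -> 'rV[R]_n) -> R.

Definition upd (R : realType) (n k : nat) (v : 'I_k -> 'rV[R]_n) (i : 'I_k)
  (x : 'rV[R]_n) : 'I_k -> 'rV[R]_n := fun j => if j == i then x else v j.

Definition is_kform (R : realType) (n k : nat) (f : form R n k) : Prop :=
  (forall (v : 'I_k -> 'rV[R]_n) (i : 'I_k) (a : R) (x y : 'rV[R]_n),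
      f (upd v i (a *: x + y)) = a * f (upd v i x) + f (upd v i y)) /\
  (forall (v : 'I_k -> 'rV[R]_n) (i j : 'I_k), i != j -> v i = v j -> f v = 0).

(* (X, v_1, ..., v_{k-1}) as a k-tuple of vectors *)
Definition cons_arg (R : realType) (n k : nat) (X : 'rV[R]_n)
  (v : 'I_k.-1 -> 'rV[R]_n) : 'I_k -> 'rV[R]_n :=
  fun i => match val i with
           | 0 => X
           | j.+1 => match (insub j : option 'I_k.-1) with
                     | Some j' => v j'
                     | None => X
                     end
           end.

Definition contract (R : realType) (n k : nat) (X : 'rV[R]_n) (alpha : form R n k)
  : form R n k.-1 := fun v => alpha (cons_arg X v).

(* Elements of V (+) wedge^k V^* are pairs (X, alpha); subsets are predicates. *)
Definition elt (R : realType) (n k : nat) := ('rV[R]_n * form R n k)%type.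

Definition is_subspace (R : realType) (n k : nat) (L : elt R n k -> Prop) : Prop :=
  (forall p, L p -> is_kform p.2) /\
  L (0, fun _ => 0) /\
  (forall p q, L p -> L q -> L (p.1 + q.1, fun v => p.2 v + q.2 v)) /\
  (forall (a : R) p, L p -> L (a *: p.1, fun v => a * p.2 v)).

Definition pairing (R : realType) (n k : nat) (p q : elt R n k) : form R n k.-1 :=
  fun v => contract p.1 q.2 v + contract q.1 p.2 v.

Definition orth (R : realType) (n k : nat) (L : elt R n k -> Prop) : elt R n k -> Prop :=
  fun q => is_kform q.2 /\ forall p, L p -> forall v, pairing p q v = 0.

Definition isotropic (R : realType) (n k : nat) (L : elt R n k -> Prop) : Prop :=
  forall p, L p -> orth L p.

Definition pr1L (R : realType) (n k : nat) (L : elt R n k -> Prop) : 'rV[R]_n -> Prop :=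
  fun X => exists alpha, L (X, alpha).
Definition pr2L (R : realType) (n k : nat) (L : elt R n k -> Prop) : form R n k -> Prop :=
  fun alpha => exists X, L (X, alpha).
Definition AL (R : realType) (n k : nat) (L : elt R n k -> Prop) : form R n k -> Prop :=
  fun alpha => L (0, alpha).
Definition LcapV (R : realType) (n k : nat) (L : elt R n k -> Prop) : 'rV[R]_n -> Prop :=
  fun X => L (X, fun _ => 0).

Definition Ann (R : realType) (n k : nat) (W : 'rV[R]_n -> Prop) : form R n k -> Prop :=
  fun alpha => is_kform alpha /\ forall Y, W Y -> forall v, contract Y alpha v = 0.
Definition circ (R : realType) (n k : nat) (S : form R n k -> Prop) : 'rV[R]_n -> Prop :=
  fun X => forall eta, S eta -> forall v, contract X eta v = 0.

Definition nonstandard (R : realType) (n k : nat) (L : elt R n k -> Prop) : Prop :=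
  isotropic L /\ ~ (forall X, circ (Ann (k := k) (pr1L L)) X <-> pr1L L X).

Definition C1 (R : realType) (n k : nat) (L : elt R n k -> Prop) : Prop :=
  forall q, L q <-> orth L q.
Definition C2w (R : realType) (n k : nat) (L : elt R n k -> Prop) : Prop :=
  isotropic L /\ forall X, LcapV L X <-> circ (pr2L L) X.
Definition C2s (R : realType) (n k : nat) (L : elt R n k -> Prop) : Prop :=
  isotropic L /\ forall alpha, Ann (k := k) (LcapV L) alpha <-> pr2L L alpha.
Definition C3w (R : realType) (n k : nat) (L : elt R n k -> Prop) : Prop :=
  isotropic L /\ forall X, pr1L L X <-> circ (AL L) X.
Definition C3s (R : realType) (n k : nat) (L : elt R n k -> Prop) : Prop :=
  isotropic L /\ forall alpha, Ann (k := k) (pr1L L) alpha <-> AL L alpha.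

(* Let E = pr_1(L) for an isotropic subspace L, and let X0 lie in Ann(E)° but not
   in E.  Choose a linear functional f vanishing on E with f(X0) = 1.  For d in
   ker f the transvection Z |-> Z + f(Z) d fixes E and sends X0 to X0 + d, so it
   carries i_{X0} alpha = 0 to i_{X0 + d} alpha = 0 for every alpha in Ann(E);
   hence Ann(E) = 0.  Isotropy gives A_L ⊆ Ann(E), which yields (C3s) and, since
   X0 is annihilated by A_L, the failure of (C3w).  As A_L = 0, L is the graph of
   a linear map gamma on E, and isotropy makes Y |-> - i_{X0} gamma(Y) skew.  Every
   skew linear map phi on a subspace is Y |-> i_Y beta for a form beta (extend phi
   one line at a time), and then (X0, beta) lies in L^perp but not in L, so (C1)
   fails.  For the independence of (C2w) and (C2s) take E = {x_0 = 0}, whose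
   annihilator vanishes in degree >= 2: the graph of 0 over E satisfies (C2s) but
   not (C2w), and the graph of X |-> i_X (e^0 ∧ ... ∧ e^k) satisfies (C2w) but not
   (C2s), because i_{e_0} (e^0 ∧ ... ∧ e^k) annihilates L ∩ V without lying in
   pr_2(L). *)

From Pilot Require Import Defs.
From mathcomp Require Import all_boot all_order all_algebra.
From mathcomp Require Import reals ring lra zify.
From Stdlib Require Import FunctionalExtensionality Classical ClassicalEpsilon.
Set Implicit Arguments. Unset Strict Implicit. Unset Printing Implicit Defensive.
Import GRing.Theory Num.Theory.
Local Open Scope ring_scope.

(* [all_algebra] exports another [form], which would shadow [Defs.form]. *)
Local Notation form := Defs.form.
(* The degree is written [_.+1] so that it can be inferred from the type of [v]. *)
Local Notation "X .: v" := (cons_arg (k := _.+1) X v) (at level 55, right associativity).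

Section KForms.
Variables (R : realType) (n : nat).
Local Notation vec := 'rV[R]_n.

Lemma upd_eq k (v : 'I_k -> vec) i x : upd v i x i = x.
Proof. by rewrite /upd eqxx. Qed.

Lemma upd_neq k (v : 'I_k -> vec) i j x : j != i -> upd v i x j = v j.
Proof. by rewrite /upd => /negbTE ->. Qed.

Lemma upd_id k (v : 'I_k -> vec) i : upd v i (v i) = v.
Proof. by apply: functional_extensionality => j; rewrite /upd; case: eqP => [->|]. Qed.

Lemma updC k (v : 'I_k -> vec) i j x y :
  i != j -> upd (upd v i x) j y = upd (upd v j y) i x.
Proof.
move=> ij; apply: functional_extensionality => l; rewrite /upd.
by case: (eqVneq l i) => [->|//]; rewrite (negbTE ij).
Qed.

Definition behead_arg k (v : 'I_k.+1 -> vec) : 'I_k -> vec := fun j => v (lift ord0 j).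

Lemma cons_arg_lift k X (v : 'I_k -> vec) j : (X .: v) (lift ord0 j) = v j.
Proof. by rewrite /cons_arg /= add0n; case: insubP => [j' _ /val_inj ->|]; rewrite ?ltn_ord. Qed.

Lemma cons_behead k (v : 'I_k.+1 -> vec) : v ord0 .: behead_arg v = v.
Proof.
apply: functional_extensionality => i.
by case: (unliftP ord0 i) => [j ->|->]; rewrite ?cons_arg_lift.
Qed.

Lemma behead_cons k X (v : 'I_k -> vec) : behead_arg (X .: v) = v.
Proof. by apply: functional_extensionality => j; rewrite /behead_arg cons_arg_lift. Qed.

Lemma upd_cons0 k X Y (v : 'I_k -> vec) : upd (X .: v) ord0 Y = Y .: v.
Proof.
apply: functional_extensionality => i.
case: (unliftP ord0 i) => [j ->|->]; last by rewrite upd_eq.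
by rewrite upd_neq ?neq_lift // !cons_arg_lift.
Qed.

Lemma upd_cons_lift k X Y (v : 'I_k -> vec) j :
  upd (X .: v) (lift ord0 j) Y = X .: upd v j Y.
Proof.
apply: functional_extensionality => i.
case: (unliftP ord0 i) => [l ->|->]; last by rewrite upd_neq // eq_sym neq_lift.
by rewrite cons_arg_lift /upd (inj_eq (@lift_inj _ ord0)); case: eqP => // _; rewrite cons_arg_lift.
Qed.

Lemma behead_upd0 k (v : 'I_k.+1 -> vec) x : behead_arg (upd v ord0 x) = behead_arg v.
Proof. by apply: functional_extensionality => j; rewrite /behead_arg upd_neq // neq_lift. Qed.

Lemma behead_upd_lift k (v : 'I_k.+1 -> vec) j x :
  behead_arg (upd v (lift ord0 j) x) = upd (behead_arg v) j x.
Proof.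
by apply: functional_extensionality => l; rewrite /behead_arg /upd (inj_eq (@lift_inj _ ord0)).
Qed.

Lemma comp_cons k (S : vec -> vec) X (w : 'I_k -> vec) : S \o (X .: w) = S X .: S \o w.
Proof.
apply: functional_extensionality => i /=.
by case: (unliftP ord0 i) => [j ->|->]; rewrite ?cons_arg_lift.
Qed.

Lemma comp_upd k (S : vec -> vec) (v : 'I_k -> vec) j x : S \o upd v j x = upd (S \o v) j (S x).
Proof. by apply: functional_extensionality => i; rewrite /= /upd; case: eqP. Qed.

Section KFormAlgebra.
Variables (k : nat) (f : form R n k).
Hypothesis f_kform : is_kform f.

Lemma kformD v i x y : f (upd v i (x + y)) = f (upd v i x) + f (upd v i y).
Proof. by rewrite -[x]scale1r (proj1 f_kform) mul1r scale1r. Qed.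

Lemma kform0 v i : f (upd v i 0) = 0.
Proof.
have := kformD v i 0 0; rewrite addr0 => /eqP.
by rewrite -subr_eq0 opprD addrA subrr sub0r oppr_eq0 => /eqP.
Qed.

Lemma kform_swap v i j x y :
  i != j -> f (upd (upd v i x) j y) = - f (upd (upd v i y) j x).
Proof.
move=> ij; have diag z : f (upd (upd v i z) j z) = 0.
  by apply: ((proj2 f_kform) _ i j ij); rewrite upd_eq upd_neq // upd_eq.
have D a b c : f (upd (upd v i (a + b)) j c) = f (upd (upd v i a) j c) + f (upd (upd v i b) j c).
  by rewrite !(updC _ _ _ ij) kformD.
have := diag (x + y); rewrite kformD !D (diag x) (diag y) add0r addr0 => /eqP.
by rewrite addrC addr_eq0 => /eqP.
Qed.

End KFormAlgebra.

Lemma is_kform0 k : is_kform (fun _ : 'I_k -> vec => 0 : R).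
Proof. by split => *; rewrite ?mulr0 ?addr0. Qed.

Lemma is_kformD k (a b : form R n k) :
  is_kform a -> is_kform b -> is_kform (fun v => a v + b v).
Proof.
move=> [a1 a2] [b1 b2]; split=> [v i c x y|v i j ij vij].
  by rewrite a1 b1 mulrDr addrACA.
by rewrite (a2 _ _ _ ij vij) (b2 _ _ _ ij vij) addr0.
Qed.

Lemma is_kformZ k (c : R) (a : form R n k) : is_kform a -> is_kform (fun v => c * a v).
Proof.
move=> [a1 a2]; split=> [v i b x y|v i j ij vij]; first by rewrite a1 mulrDr mulrCA.
by rewrite (a2 _ _ _ ij vij) mulr0.
Qed.

Lemma is_kformN k (a : form R n k) : is_kform a -> is_kform (fun v => - a v).
Proof.
move=> [a1 a2]; split=> [v i b x y|v i j ij vij]; first by rewrite a1 opprD mulrN.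
by rewrite (a2 _ _ _ ij vij) oppr0.
Qed.

Lemma is_kform_comp k (S : vec -> vec) (a : form R n k) :
  linear S -> is_kform a -> is_kform (fun v => a (S \o v)).
Proof.
move=> S_lin [a1 a2]; split=> [v i b x y|v i j ij vij] /=.
  by rewrite !comp_upd S_lin a1.
by apply: (a2 _ i j ij); rewrite /= vij.
Qed.

Section Contraction.
Variables (k : nat) (a : form R n k.+1).
Hypothesis a_kform : is_kform a.

Lemma is_kform_contract X : is_kform (contract X a).
Proof.
case: a_kform => a1 a2; split=> [v i b x y|v i j ij vij]; rewrite /contract.
  by rewrite -!upd_cons_lift a1.
by apply: (a2 _ (lift ord0 i) (lift ord0 j)); rewrite ?(inj_eq (@lift_inj _ ord0)) ?cons_arg_lift.
Qed.

Lemma contract_lin b X Y w : contract (b *: X + Y) a w = b * contract X a w + contract Y a w.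
Proof. by rewrite /contract -(upd_cons0 0 (b *: X + Y)) (proj1 a_kform) !upd_cons0. Qed.

Lemma contract0 w : contract 0 a w = 0.
Proof. by rewrite /contract -(upd_cons0 0) kform0. Qed.

Lemma kform_cons_decomp Y c t w : a (Y .: w) = a ((Y - t *: c) .: w) + t * a (c .: w).
Proof.
have := contract_lin t c (Y - t *: c) w.
by rewrite /contract addrC subrK => ->; rewrite addrC.
Qed.

End Contraction.

Lemma kform_swap01 k (a : form R n k.+2) X Y w :
  is_kform a -> a (X .: Y .: w) = - a (Y .: X .: w).
Proof.
move=> a_kform; pose base := 0 .: 0 .: w.
have E P Q : P .: Q .: w = upd (upd base ord0 P) (lift ord0 ord0) Q.
  by rewrite upd_cons0 upd_cons_lift upd_cons0.
by rewrite !E kform_swap.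
Qed.

Lemma kform_alt01 k (a : form R n k.+2) X w : is_kform a -> a (X .: X .: w) = 0.
Proof.
by move=> a_kform; apply: (proj2 a_kform _ ord0 (lift ord0 ord0)); rewrite ?cons_arg_lift.
Qed.

End KForms.

Section LinearAlgebra.
Variables (R : realType) (n : nat).
Local Notation vec := 'rV[R]_n.

Definition vsubspace (E : vec -> Prop) : Prop :=
  [/\ E 0, forall X Y, E X -> E Y -> E (X + Y) & forall a X, E X -> E (a *: X)].

Lemma vsubspace_mx E : vsubspace E -> exists M : 'M[R]_n, forall Y, E Y <-> (Y <= M)%MS.
Proof.
case=> E0 ED EZ; pose in_E (M : 'M[R]_n) := forall Z : vec, (Z <= M)%MS -> E Z.
(* Grow [M] inside [E] one vector at a time; its rank cannot exceed [n]. *)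
have [[M [ME EM]]|[M [_]]] : (exists M, in_E M /\ forall Y, E Y -> (Y <= M)%MS) \/
                              exists M, in_E M /\ (n < \rank M)%N; last 2 first.
- by exists M => Y; split => [/EM|/ME].
- by rewrite ltnNge rank_leq_col.
elim: n.+1 => [|r [|[M [ME rM]]]]; [right; exists 0 | by left |].
  by split=> // Z; rewrite submx0 => /eqP ->.
have [EM|] := classic (forall Y, E Y -> (Y <= M)%MS); first by left; exists M.
move=> /not_all_ex_not[Y /[dup] /not_imply_elim EY /not_imply_elim2 nYM].
right; exists (M + Y)%MS; split.
  move=> Z /sub_addsmxP[[u1 u2] /= ->]; apply: ED; first exact/ME/submxMl.
  by have /sub_rVP[a ->] := submxMl u2 Y; apply: EZ.
have: (M < M + Y)%MS.
  by rewrite ltmxE addsmxSl; apply/negP => /(submx_trans (addsmxSr M Y)).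
by rewrite ltmxErank => /andP[_]; apply: leq_ltn_trans.
Qed.

Lemma submx_separating_functional (M : 'M[R]_n) (X0 : vec) : ~~ (X0 <= M)%MS ->
  exists f : vec -> R, [/\ scalar f, forall Y, (Y <= M)%MS -> f Y = 0 & f X0 = 1].
Proof.
rewrite submxE => /matrix0Pn[i [j nz]]; rewrite [i]ord1 in nz.
exists (fun Y => (Y *m cokermx M) 0 j / (X0 *m cokermx M) 0 j); split=> [a Y Z|Y|].
- by rewrite mulmxDl -scalemxAl !mxE mulrDl mulrA.
- by rewrite submxE => /eqP ->; rewrite mxE mul0r.
- exact: divff.
Qed.

Lemma separating_functional (E : vec -> Prop) (X0 : vec) : vsubspace E -> ~ E X0 ->
  exists f : vec -> R, [/\ scalar f, forall Y, E Y -> f Y = 0 & f X0 = 1].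
Proof.
move=> /vsubspace_mx[M EM] nEX0.
have [|f [f_scalar fM fX0]] := @submx_separating_functional M X0.
  by apply/negP => /EM.
by exists f; split=> // Y /EM /fM.
Qed.

Section ScalarFunction.
Variable f : vec -> R.
Hypothesis f_scalar : scalar f.

Lemma scalarfP a X Y : f (a *: X + Y) = a * f X + f Y.
Proof. exact: f_scalar. Qed.

Lemma scalarfD X Y : f (X + Y) = f X + f Y.
Proof. by rewrite -[X]scale1r scalarfP mul1r scale1r. Qed.

Lemma scalarf0 : f 0 = 0.
Proof.
have := scalarfD 0 0; rewrite addr0 => /eqP.
by rewrite -subr_eq0 opprD addrA subrr sub0r oppr_eq0 => /eqP.
Qed.

Lemma scalarfZ a X : f (a *: X) = a * f X.
Proof. by rewrite -[a *: X]addr0 scalarfP scalarf0 addr0. Qed.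

Lemma scalarfB X Y : f (X - Y) = f X - f Y.
Proof. by rewrite scalarfD -scaleN1r scalarfZ mulN1r. Qed.

End ScalarFunction.

End LinearAlgebra.

Section Annihilator.
Variables (R : realType) (n : nat).
Local Notation vec := 'rV[R]_n.

Lemma Ann_eq0_of_circ k (E : vec -> Prop) X0 (alpha : form R n k.+1) :
  vsubspace E -> ~ E X0 -> circ (Ann (k := k.+1) E) X0 -> Ann E alpha ->
  forall v, alpha v = 0.
Proof.
move=> Esub nEX0 cX0 [a_kform aE].
have [f [f_scalar fE fX0]] := separating_functional Esub nEX0.
have alpha_shift d w : f d = 0 -> alpha ((X0 + d) .: w) = 0.
  move=> fd; pose S Z := Z + f Z *: d.
  have S_lin : linear S.
    by move=> b Y Z; rewrite /S scalarfP // scalerDl scalerDr scalerA addrACA.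
  have SE Y : E Y -> S Y = Y by move=> /fE fY; rewrite /S fY scale0r addr0.
  have SK Z : S (Z - f Z *: d) = Z.
    by rewrite /S scalarfB // scalarfZ // fd mulr0 subr0 subrK.
  have : Ann E (fun v => alpha (S \o v)).
    split; first exact: is_kform_comp.
    by move=> Y EY v; rewrite /contract comp_cons SE //; apply: aE.
  move=> /cX0 /(_ ((fun Z => Z - f Z *: d) \o w)); rewrite /contract comp_cons.
  have -> : S \o ((fun Z => Z - f Z *: d) \o w) = w.
    by apply: functional_extensionality => i /=; rewrite SK.
  by rewrite /S fX0 scale1r.
have alpha_X0 w : alpha (X0 .: w) = 0 by rewrite -[X0]addr0 alpha_shift ?scalarf0.
have alpha_ker d w : f d = 0 -> alpha (d .: w) = 0.
  move=> fd; have := contract_lin a_kform 1 X0 d w.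
  by rewrite scale1r mul1r /contract alpha_shift // alpha_X0 add0r.
move=> v; rewrite -(cons_behead v); set u := v ord0.
have := contract_lin a_kform (f u) X0 (u - f u *: X0) (behead_arg v).
rewrite addrC subrK /contract => ->.
by rewrite alpha_X0 alpha_ker ?mulr0 ?add0r // scalarfB // scalarfZ // fX0 mulr1 subrr.
Qed.

End Annihilator.

Section Extension.
Variables (R : realType) (n : nat).
Local Notation vec := 'rV[R]_n.

(* For [k = 0], [contract Y] of a 0-form does not depend on [Y], so antisymmetry would
   force [phi = 0]; hence the guard. *)
Record skew_on k (E : vec -> Prop) (phi : vec -> form R n k) : Prop := SkewOn {
  skew_kform : forall Y, E Y -> is_kform (phi Y);
  skew_lin : forall a Y Z, E Y -> E Z ->
    forall w, phi (a *: Y + Z) w = a * phi Y w + phi Z w;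
  skew_antisym : (0 < k)%N -> forall Y Z, E Y -> E Z ->
    forall w, contract Z (phi Y) w = - contract Y (phi Z) w }.
Arguments skew_kform {k E phi} s Y.
Arguments skew_antisym {k E phi} s k0 Y Z.

Lemma skew_onW k (E E' : vec -> Prop) (phi : vec -> form R n k) :
  (forall Y, E' Y -> E Y) -> skew_on E phi -> skew_on E' phi.
Proof.
move=> sE [phi_kform phi_lin phi_antisym]; split=> [Y /sE|a Y Z /sE EY /sE EZ|k0 Y Z /sE EY /sE EZ].
- exact: phi_kform.
- exact: phi_lin.
- exact: phi_antisym.
Qed.

Lemma skew_on_diag k (phi : vec -> form R n k) x w j :
  skew_on (fun=> True) phi -> w j = x -> phi x w = 0.
Proof.
case: k phi w j => [|k] phi w j sk wj; first by case: j wj.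
have diag0 v : v ord0 = x -> phi x v = 0.
  move=> v0; rewrite -(cons_behead v) v0.
  by have := skew_antisym sk isT x x I I (behead_arg v); rewrite /contract; lra.
have [j0|nj0] := eqVneq j ord0; first by apply: diag0; rewrite -j0.
rewrite -(upd_id w ord0) -[upd w _ _](upd_id _ j) upd_neq // wj.
rewrite (kform_swap (skew_kform sk x I)) 1?eq_sym // diag0 ?oppr0 //.
by rewrite upd_neq ?upd_eq // eq_sym.
Qed.

Lemma skew_on_total_contract k (phi : vec -> form R n k) : skew_on (fun=> True) phi ->
  exists beta : form R n k.+1, is_kform beta /\ forall Y w, beta (Y .: w) = phi Y w.
Proof.
move=> sk; exists (fun v => phi (v ord0) (behead_arg v)).
split=> [|Y w]; last by rewrite behead_cons.
split=> [v i a x y|v i j ij vij].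
  case: (unliftP ord0 i) => [i' ->|->].
    by rewrite !upd_neq ?neq_lift // !behead_upd_lift (proj1 (skew_kform sk _ I)).
  by rewrite !upd_eq !behead_upd0 (skew_lin sk).
case: (unliftP ord0 i) ij vij => [i' ->|->]; case: (unliftP ord0 j) => [j' ->|->] //.
- rewrite (inj_eq (@lift_inj _ ord0)) => ij vij.
  exact: (proj2 (skew_kform sk _ I) (behead_arg v) i' j' ij).
- by move=> _ vij; apply: (skew_on_diag (j := i')).
- by move=> _ vij; apply: (skew_on_diag (j := j')).
Qed.

(* [phi] extends from [M] to [M + c] as [Y |-> phi (P Y) + f Y *: psi], with [P] the
   projection along [c]; skewness forces [i_Y psi = - i_c phi (P Y)], an extension
   problem one degree lower. *)
Section ExtendAlongLine.
Variables (M : 'M[R]_n) (c : vec) (f : vec -> R).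
Hypotheses (f_scalar : scalar f) (fM : forall Y, (Y <= M)%MS -> f Y = 0) (fc : f c = 1).

Definition proj_along Y := Y - f Y *: c.

Lemma proj_along_sub Y : (Y <= M + c)%MS -> (proj_along Y <= M)%MS.
Proof.
move=> /sub_addsmxP[[u1 u2] /= ->]; have /sub_rVP[a ->] := submxMl u2 c.
by rewrite /proj_along scalarfD // scalarfZ // fc fM ?submxMl // add0r mulr1 addrK submxMl.
Qed.

Lemma proj_along_id Y : (Y <= M)%MS -> proj_along Y = Y.
Proof. by move=> /fM fY; rewrite /proj_along fY scale0r subr0. Qed.

Lemma proj_alongP a Y Z : proj_along (a *: Y + Z) = a *: proj_along Y + proj_along Z.
Proof.
rewrite /proj_along scalarfP // scalerDl scalerBr scalerA opprD addrACA.
by rewrite -!addrA; congr (_ + _); rewrite addrCA.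
Qed.

Lemma skew_on_proj_contract k (phi : vec -> form R n k.+1) :
  skew_on (fun Y => (Y <= M)%MS) phi ->
  skew_on (fun Y => (Y <= M + c)%MS) (fun Y w => - contract c (phi (proj_along Y)) w).
Proof.
move=> sk; split.
- move=> Y /proj_along_sub MY.
  exact/is_kformN/is_kform_contract/(skew_kform sk _ MY).
- move=> a Y Z /proj_along_sub MY /proj_along_sub MZ w.
  by rewrite proj_alongP /contract (skew_lin sk) // opprD mulrN.
case: k phi sk => [//|k] phi sk _ Y Z /proj_along_sub MY /proj_along_sub MZ w.
have PYk := skew_kform sk _ MY; have PZk := skew_kform sk _ MZ.
rewrite /contract opprK kform_swap01 //.
rewrite (kform_cons_decomp PYk Z c (f Z)) kform_alt01 // mulr0 addr0.
have := skew_antisym sk isT _ _ MY MZ (c .: w); rewrite /contract => ->.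
rewrite kform_swap01 // opprK.
have := kform_cons_decomp (is_kform_contract PZk c) Y c (f Y) w.
by rewrite /contract kform_alt01 // mulr0 addr0 opprK => ->.
Qed.

Lemma skew_on_proj_extend k (phi : vec -> form R n k) (psi : form R n k) :
  skew_on (fun Y => (Y <= M)%MS) phi -> is_kform psi ->
  ((0 < k)%N -> forall Y w, (Y <= M + c)%MS ->
     contract Y psi w = - contract c (phi (proj_along Y)) w) ->
  skew_on (fun Y => (Y <= M + c)%MS) (fun Y w => phi (proj_along Y) w + f Y * psi w).
Proof.
move=> sk psi_kform psiE; split.
- move=> Y /proj_along_sub MY.
  exact: is_kformD (skew_kform sk _ MY) (is_kformZ _ psi_kform).
- move=> a Y Z /proj_along_sub MY /proj_along_sub MZ w.
  by rewrite proj_alongP (skew_lin sk) // scalarfP //; ring.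
case: k phi psi sk psi_kform psiE => [//|k] phi psi sk psi_kform psiE _ Y Z MY' MZ' w.
have MY := proj_along_sub MY'; have MZ := proj_along_sub MZ'.
have := psiE isT Y w MY'; have := psiE isT Z w MZ'; rewrite /contract => -> ->.
rewrite (kform_cons_decomp (skew_kform sk _ MY) Z c (f Z)).
rewrite (kform_cons_decomp (skew_kform sk _ MZ) Y c (f Y)).
have := skew_antisym sk isT _ _ MY MZ w; rewrite /contract => ->.
ring.
Qed.

End ExtendAlongLine.

Lemma skew_on_full_contract k (M : 'M[R]_n) (phi : vec -> form R n k) : row_full M ->
  skew_on (fun Y => (Y <= M)%MS) phi ->
  exists beta : form R n k.+1, is_kform beta /\ forall Y w, (Y <= M)%MS -> beta (Y .: w) = phi Y w.
Proof.
move=> Mfull /(skew_onW (fun Y _ => submx_full Y Mfull))/skew_on_total_contract.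
by case=> beta [beta_kform betaE]; exists beta.
Qed.

Lemma skew_on_submx_contract d : forall k (M : 'M[R]_n) (phi : vec -> form R n k),
  (n - \rank M <= d)%N -> skew_on (fun Y => (Y <= M)%MS) phi ->
  exists beta : form R n k.+1, is_kform beta /\ forall Y w, (Y <= M)%MS -> beta (Y .: w) = phi Y w.
Proof.
elim: d => [|d IH] k M phi codim sk; have [Mfull|Mnfull] := boolP (row_full M).
- exact: skew_on_full_contract.
- by move: Mnfull; rewrite /row_full eqn_leq rank_leq_col -subn_eq0 -leqn0 codim.
- exact: skew_on_full_contract.
have [c nMc] : exists c : vec, ~~ (c <= M)%MS.
  by move: Mnfull; rewrite -sub1mx => /row_subPn[i]; exists (row i 1%:M).
have [f [f_scalar fM fc]] := submx_separating_functional nMc.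
have codim' : (n - \rank (M + c)%MS <= d)%N.
  have : (M < M + c)%MS.
    by rewrite ltmxE addsmxSl (contra (submx_trans (addsmxSr M c))).
  by rewrite ltmxErank => /andP[_]; have := rank_leq_col (M + c)%MS; lia.
have [psi [psi_kform psiE]] : exists psi : form R n k, is_kform psi /\
    ((0 < k)%N -> forall Y w, (Y <= M + c)%MS ->
       contract Y psi w = - contract c (phi (proj_along c f Y)) w).
  case: k phi sk => [|k] phi sk; first by exists (fun _ => 0); split; first exact: is_kform0.
  have [psi [psi_kform psiE]] := IH _ _ _ codim' (skew_on_proj_contract f_scalar fM fc sk).
  by exists psi; split=> // _ Y w MY; rewrite /contract psiE.
have [beta [beta_kform betaE]] :=
  IH _ _ _ codim' (skew_on_proj_extend f_scalar fM fc sk psi_kform psiE).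
exists beta; split=> // Y w MY.
by rewrite betaE ?(submx_trans MY (addsmxSl _ _)) // (proj_along_id c fM MY) fM // mul0r addr0.
Qed.

Lemma skew_on_contract k (E : vec -> Prop) (phi : vec -> form R n k) :
  vsubspace E -> skew_on E phi ->
  exists beta : form R n k.+1, is_kform beta /\ forall Y w, E Y -> beta (Y .: w) = phi Y w.
Proof.
move=> /vsubspace_mx[M EM] /(skew_onW (fun Y => (EM Y).2)) sk.
have [beta [beta_kform betaE]] := skew_on_submx_contract (leqnn _) sk.
by exists beta; split=> // Y w /EM; apply: betaE.
Qed.

End Extension.

Section NonStandard.
Variables (R : realType) (n : nat).
Local Notation vec := 'rV[R]_n.

Lemma contractC k (a : form R n k.+1) X Y w : is_kform a -> (0 < k)%N ->
  contract Y (contract X a) w = - contract X (contract Y a) w.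
Proof. by case: k a w => [//|k] a w a_kform _; exact: kform_swap01. Qed.

Lemma isotropic_kform k (L : elt R n k -> Prop) p : isotropic L -> L p -> is_kform p.2.
Proof. by move=> isoL /isoL[]. Qed.

Lemma isotropic_contract k (L : elt R n k -> Prop) Y Z a b :
  isotropic L -> L (Y, a) -> L (Z, b) -> forall w, contract Z a w = - contract Y b w.
Proof.
move=> isoL LYa /isoL[_ /(_ _ LYa) orthYZ] w; apply/eqP.
by rewrite -addr_eq0 addrC; apply/eqP; apply: orthYZ.
Qed.

Lemma vsubspace_pr1L k (L : elt R n k -> Prop) : is_subspace L -> vsubspace (pr1L L).
Proof.
case=> _ [L0 [LD LZ]]; split; first by exists (fun _ => 0).
  by move=> X Y [a LXa] [b LYb]; exists (fun v => a v + b v); apply: (LD (X, a) (Y, b)).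
by move=> c X [a LXa]; exists (fun v => c * a v); apply: (LZ c (X, a)).
Qed.

Lemma AL_sub_Ann k (L : elt R n k.+1 -> Prop) alpha :
  isotropic L -> AL L alpha -> Ann (pr1L L) alpha.
Proof.
move=> isoL La; split; first exact: isotropic_kform isoL La.
move=> Y [b LYb] w; rewrite (isotropic_contract isoL La LYb) contract0 ?oppr0 //.
exact: isotropic_kform isoL LYb.
Qed.

Lemma nonstandard_witness k (L : elt R n k -> Prop) : nonstandard L ->
  exists X0, circ (Ann (k := k) (pr1L L)) X0 /\ ~ pr1L L X0.
Proof.
case=> _ nstd; apply: NNPP => noX0; apply: nstd => X; split=> [cX|EX].
  by apply: NNPP => nEX; apply: noX0; exists X.
by move=> eta [_ etaE] w; apply: etaE.
Qed.

Lemma nonstandard_Ann_eq0 k (L : elt R n k.+1 -> Prop) (alpha : form R n k.+1) :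
  is_subspace L -> nonstandard L -> Ann (pr1L L) alpha -> forall v, alpha v = 0.
Proof.
move=> Lsub /nonstandard_witness[X0 [cX0 nEX0]].
exact: Ann_eq0_of_circ (vsubspace_pr1L Lsub) nEX0 cX0.
Qed.

Lemma nonstandard_C3s k (L : elt R n k.+1 -> Prop) : is_subspace L -> nonstandard L -> C3s L.
Proof.
move=> Lsub Lnstd; split=> [|alpha]; first by case: Lnstd.
split=> [/(nonstandard_Ann_eq0 Lsub Lnstd) alpha0|]; last exact: AL_sub_Ann (proj1 Lnstd).
have -> : alpha = fun _ => 0 by apply: functional_extensionality.
by case: Lsub => _ [].
Qed.

Lemma nonstandard_not_C3w k (L : elt R n k.+1 -> Prop) : nonstandard L -> ~ C3w L.
Proof.
move=> Lnstd [isoL C3wL]; have [X0 [cX0 nEX0]] := nonstandard_witness Lnstd.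
by apply/nEX0/C3wL => alpha /(AL_sub_Ann isoL); apply: cX0.
Qed.

Lemma AL_trivial_orth k (L : elt R n k.+1 -> Prop) X0 : is_subspace L -> isotropic L ->
  (forall alpha, AL L alpha -> forall v, alpha v = 0) -> exists beta, orth L (X0, beta).
Proof.
move=> Lsub isoL AL0; have [L_kform [_ [LD LZ]]] := Lsub.
pose gam Y := epsilon (inhabits (fun _ => 0 : R)) (fun a => L (Y, a)).
have gamE Y a : L (Y, a) -> gam Y = a.
  move=> LYa; have LYg : L (Y, gam Y) by apply: (epsilon_spec _ (fun a => L (Y, a))); exists a.
  have := LD _ _ LYg (LZ (-1) _ LYa); rewrite /= scaleN1r subrr => /AL0 ga0.
  by apply: functional_extensionality => v; have /eqP := ga0 v; rewrite mulN1r subr_eq0 => /eqP.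
have L_gam Y : pr1L L Y -> L (Y, gam Y) by case=> a LYa; rewrite (gamE _ _ LYa).
have gam_kform Y : pr1L L Y -> is_kform (gam Y) by move=> /L_gam/L_kform.
pose phi Y w := - contract X0 (gam Y) w.
have sk : skew_on (pr1L L) phi.
  split=> [Y /gam_kform gY|a Y Z /L_gam LY /L_gam LZ' w|k0 Y Z EY EZ w].
  - exact/is_kformN/is_kform_contract.
  - by rewrite /phi (gamE _ _ (LD _ _ (LZ a _ LY) LZ')) /contract /= opprD mulrN.
  rewrite /phi /contract -/(contract X0 _ _) -/(contract Z _ _).
  rewrite -(contractC _ _ _ (gam_kform _ EY) k0).
  have -> : contract Z (gam Y) = fun w => - contract Y (gam Z) w.
    by apply: functional_extensionality; apply: isotropic_contract isoL (L_gam _ EY) (L_gam _ EZ).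
  have := contractC X0 Y w (gam_kform _ EZ) k0.
  by rewrite /contract => ->; rewrite opprK.
have [beta [beta_kform betaE]] := skew_on_contract (vsubspace_pr1L Lsub) sk.
exists beta; split=> // [[Y a]] LYa w; rewrite /pairing /= /contract betaE; last by exists a.
by rewrite /phi (gamE _ _ LYa) addNr.
Qed.

Lemma nonstandard_not_C1 k (L : elt R n k.+1 -> Prop) :
  is_subspace L -> nonstandard L -> ~ C1 L.
Proof.
move=> Lsub [isoL nstd] C1L; have [X0 [_ nEX0]] := nonstandard_witness (conj isoL nstd).
have AL0 alpha : AL L alpha -> forall v, alpha v = 0.
  by move=> /(AL_sub_Ann isoL); apply: nonstandard_Ann_eq0.
have [beta /C1L LX0] := AL_trivial_orth X0 Lsub isoL AL0.
by apply: nEX0; exists beta.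
Qed.

End NonStandard.

Section Graphs.
Variables (R : realType) (n : nat).
Local Notation vec := 'rV[R]_n.

Definition graph k (E : vec -> Prop) (gamma : vec -> form R n k) : elt R n k -> Prop :=
  fun p => E p.1 /\ p.2 = gamma p.1.

Lemma graph_subspace k (E : vec -> Prop) (gamma : vec -> form R n k) :
  vsubspace E -> (forall X, is_kform (gamma X)) ->
  (forall a X Y, gamma (a *: X + Y) = fun v => a * gamma X v + gamma Y v) ->
  is_subspace (graph E gamma).
Proof.
case=> E0 ED EZ gamma_kform gamma_lin.
have gamma0 : gamma 0 = fun _ => 0.
  have := gamma_lin (-1) 0 0; rewrite scaler0 addr0 => ->.
  by apply: functional_extensionality => v; rewrite mulN1r addNr.
split; first by move=> [X a] [_ /= ->].
split; first by split; rewrite //= gamma0.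
split=> [[X a] [Y b] [EX /= ->] [EY /= ->]|a [X b] [EX /= ->]]; split; rewrite /=; auto.
  have := gamma_lin 1 X Y; rewrite scale1r => ->.
  by apply: functional_extensionality => v; rewrite mul1r.
have := gamma_lin a X 0; rewrite addr0 gamma0 => ->.
by apply: functional_extensionality => v; rewrite addr0.
Qed.

Lemma graph_isotropic k (E : vec -> Prop) (gamma : vec -> form R n k) :
  (forall X, is_kform (gamma X)) ->
  (forall X Y, E X -> E Y -> forall w, contract Y (gamma X) w = - contract X (gamma Y) w) ->
  isotropic (graph E gamma).
Proof.
move=> gamma_kform gamma_skew [X a] [EX /= ->]; split=> [|[Y b] [EY /= ->] w].
  exact: gamma_kform.
by rewrite /pairing /= gamma_skew // addNr.
Qed.

End Graphs.

Section Hyperplane.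
Variables (R : realType) (n : nat).
Local Notation vec := 'rV[R]_n.
Variables (H : vec -> Prop) (c : vec) (coef : vec -> R).
Hypothesis H_split : forall w, H (w - coef w *: c).

Lemma Ann_split_eq0 k (alpha : form R n k.+2) : Ann H alpha -> forall v, alpha v = 0.
Proof.
case=> a_kform aH v; rewrite -(cons_behead v) -(cons_behead (behead_arg v)).
set x := v ord0; set y := behead_arg v ord0; set w := behead_arg (behead_arg v).
have Ann0 Y u : H Y -> alpha (Y .: u) = 0 by move=> HY; apply: aH.
rewrite (kform_cons_decomp a_kform x c (coef x)) Ann0 // add0r kform_swap01 //.
by rewrite (kform_cons_decomp a_kform y c (coef y)) Ann0 // kform_alt01 // mulr0 addr0 oppr0 mulr0.
Qed.

Lemma contract_eq0_split k (omega : form R n k.+3) X : is_kform omega ->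
  (forall Y w, H Y -> omega (Y .: X .: w) = 0) -> forall w, contract X omega w = 0.
Proof.
move=> o_kform oH v; have oX_kform := is_kform_contract o_kform X.
have oXH Y u : H Y -> contract X omega (Y .: u) = 0.
  by move=> HY; rewrite /contract kform_swap01 // oH // oppr0.
rewrite -(cons_behead v) -(cons_behead (behead_arg v)).
set y := v ord0; set z := behead_arg v ord0; set w := behead_arg (behead_arg v).
rewrite (kform_cons_decomp oX_kform y c (coef y)) oXH // add0r.
have := kform_cons_decomp (is_kform_contract oX_kform c) z c (coef z) w.
rewrite /contract => ->.
rewrite -/(contract X omega _) kform_swap01 // oXH // oppr0 add0r.
by rewrite -/(contract X omega _) kform_alt01 // !mulr0.
Qed.

End Hyperplane.

Section Coordinates.
Variables (R : realType) (n : nat).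
Local Notation vec := 'rV[R]_n.

Definition coord_hyperplane (i : 'I_n) : vec -> Prop := fun X => X 0 i = 0.

Lemma vsubspace_coord_hyperplane i : vsubspace (coord_hyperplane i).
Proof.
split=> [|X Y|a X]; rewrite /coord_hyperplane !mxE // => ->; last exact: mulr0.
by move=> ->; rewrite addr0.
Qed.

Lemma coord_hyperplane_split i (w : vec) : coord_hyperplane i (w - w 0 i *: delta_mx 0 i).
Proof. by rewrite /coord_hyperplane !mxE !eqxx mulr1 subrr. Qed.

Lemma delta_notin_coord_hyperplane i : ~ coord_hyperplane i (delta_mx 0 i).
Proof. by rewrite /coord_hyperplane mxE !eqxx => /eqP; rewrite oner_eq0. Qed.

Lemma nonstandard_coord_hyperplane k i (L : elt R n k.+2 -> Prop) :
  isotropic L -> (forall X, pr1L L X <-> coord_hyperplane i X) -> nonstandard L.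
Proof.
move=> isoL EL; split=> // nstd; apply: (@delta_notin_coord_hyperplane i).
apply/EL/nstd => eta [eta_kform etaE] w.
rewrite /contract; apply: (Ann_split_eq0 (@coord_hyperplane_split i)).
by split=> // Y /EL; exact: etaE.
Qed.

Section DetForm.
Variables (m : nat) (hm : (m <= n)%N).

Definition det_form : form R n m := fun v => \det (\matrix_(i, j) v i 0 (widen_ord hm j)).

Definition std_basis (j : 'I_m) : vec := delta_mx 0 (widen_ord hm j).

Lemma is_kform_det_form : is_kform det_form.
Proof.
have lift_neq (i : 'I_m) r : (lift i r == i) = false by rewrite eq_sym (negbTE (neq_lift _ _)).
split=> [v i a x y|v i j ij vij]; last first.
  by apply: (determinant_alternate ij) => l; rewrite !mxE vij.
rewrite /det_form -[X in _ = _ + X]mul1r; apply: (determinant_multilinear (i0 := i)).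
- by apply/matrixP => r j; rewrite !mxE /upd eqxx !mxE mul1r.
- by apply/matrixP => r j; rewrite !mxE /upd lift_neq.
- by apply/matrixP => r j; rewrite !mxE /upd lift_neq.
Qed.

Lemma std_basis_coord j l : std_basis j 0 (widen_ord hm l) = (j == l)%:R.
Proof. by rewrite /std_basis mxE eqxx /= -val_eqE /= val_eqE eq_sym. Qed.

Lemma det_form_std_basis : det_form std_basis = 1.
Proof.
rewrite /det_form -[RHS](det1 R m); congr (\det _); apply/matrixP => i j.
by rewrite [LHS]mxE std_basis_coord mxE.
Qed.

End DetForm.

Lemma det_form_col0 m (hm : (m.+1 <= n)%N) (v : 'I_m.+1 -> vec) :
  (forall i, v i 0 (widen_ord hm ord0) = 0) -> det_form hm v = 0.
Proof.
by move=> v0; rewrite /det_form (expand_det_col _ ord0) big1 // => i _; rewrite mxE v0 mul0r.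
Qed.

Lemma det_form_cons_basis m (hm : (m.+1 <= n)%N) X :
  det_form hm (X .: behead_arg (std_basis hm)) = X 0 (widen_ord hm ord0).
Proof.
set x := X 0 _; rewrite (kform_cons_decomp (is_kform_det_form hm) X (std_basis hm ord0) x).
rewrite cons_behead det_form_std_basis mulr1 det_form_col0 ?add0r // => i.
case: (unliftP ord0 i) => [j ->|->]; first by rewrite cons_arg_lift std_basis_coord.
exact: coord_hyperplane_split.
Qed.

End Coordinates.

Section Examples.
Variables (R : realType) (n k : nat) (hm : (k.+3 <= n)%N).
Local Notation H := (coord_hyperplane (widen_ord hm ord0)).
Local Notation Om := (det_form (R := R) hm).

Lemma pr1L_graph (gamma : 'rV[R]_n -> form R n k.+2) X : pr1L (graph H gamma) X <-> H X.
Proof. by split=> [[a []]|HX] //; exists (gamma X). Qed.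

Lemma zero_graph_C2s_not_C2w : exists L : elt R n k.+2 -> Prop,
  is_subspace L /\ nonstandard L /\ C2s L /\ ~ C2w L.
Proof.
pose L := graph H (fun _ _ => 0 : R) : elt R n k.+2 -> Prop.
have isoL : isotropic L.
  by apply: graph_isotropic => [X|X Y _ _ w]; [exact: is_kform0 | rewrite /contract oppr0].
exists L; split; last split; last split.
- apply: graph_subspace => [|X|a X Y]; [exact: vsubspace_coord_hyperplane | exact: is_kform0 |].
  by apply: functional_extensionality => v; rewrite mulr0 addr0.
- exact: nonstandard_coord_hyperplane isoL (pr1L_graph _).
- split=> // alpha; split=> [[alpha_kform alphaE]|[X [_ /= ->]]]; last first.
    by split=> [|Y _ w //]; exact: is_kform0.
  exists 0; split; first by rewrite /coord_hyperplane mxE.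
  apply: functional_extensionality => v /=.
  apply: (Ann_split_eq0 (@coord_hyperplane_split _ _ (widen_ord hm ord0))).
  by split=> // Y HY; apply: alphaE.
- case=> _ C2wL; apply: (@delta_notin_coord_hyperplane _ _ (widen_ord hm ord0)).
  by apply: (proj1 ((C2wL _).2 _)) => eta [X [_ /= ->]].
Qed.

Lemma det_graph_C2w_not_C2s : exists L : elt R n k.+2 -> Prop,
  is_subspace L /\ nonstandard L /\ C2w L /\ ~ C2s L.
Proof.
have Om_kform : is_kform Om := is_kform_det_form R hm.
pose L := graph H (fun X => contract X Om).
have isoL : isotropic L.
  apply: graph_isotropic => [X|X Y _ _ w]; first exact: is_kform_contract.
  exact: contractC.
have C2wL : C2w L.
  split=> // X; split=> [[_ /= oX] eta [Y [_ /= ->]] w|cX].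
    by rewrite contractC // -oX /contract oppr0.
  have oX : forall w, contract X Om w = 0.
    apply: (contract_eq0_split (@coord_hyperplane_split _ _ (widen_ord hm ord0)) Om_kform).
    by move=> Y w' HY; apply: (cX (contract Y Om)); exists Y.
  split; last by apply: functional_extensionality => w; rewrite oX.
  by have := oX (behead_arg (std_basis R hm)); rewrite /contract det_form_cons_basis.
exists L; split; last split; last split => //.
- apply: graph_subspace => [|X|a X Y]; first exact: vsubspace_coord_hyperplane.
    exact: is_kform_contract.
  by apply: functional_extensionality => v; rewrite contract_lin.
- exact: nonstandard_coord_hyperplane isoL (pr1L_graph _).
case=> _ C2sL.
have : Ann (LcapV L) (contract (std_basis R hm ord0) Om).
  split=> [|Y [_ /= oY] w]; first exact: is_kform_contract.
  by rewrite contractC // -oY /contract oppr0.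
move=> /C2sL[Y [HY /= eY]].
have := congr1 (fun g => g (behead_arg (std_basis R hm))) eY.
rewrite /= /contract !det_form_cons_basis std_basis_coord eqxx HY => /eqP.
by rewrite oner_eq0.
Qed.

End Examples.

Unset Implicit Arguments. Set Strict Implicit.

Theorem propositionA5 (R : realType) (n k : nat) :
  (2 <= k)%N -> (k <= n.-1)%N ->
  (forall L : elt R n k -> Prop, is_subspace L -> nonstandard L ->
     C3s L /\ ~ C3w L /\ ~ C1 L) /\
  (exists L : elt R n k -> Prop, is_subspace L /\ nonstandard L /\ C2s L /\ ~ C2w L) /\
  (exists L : elt R n k -> Prop, is_subspace L /\ nonstandard L /\ C2w L /\ ~ C2s L).
Proof.
case: k => [|[|k]] // _ hkn; have hm : (k.+3 <= n)%N by case: n hkn.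
split.
  move=> L Lsub Lnstd; split; first exact: nonstandard_C3s.
  by split; [exact: nonstandard_not_C3w | exact: nonstandard_not_C1].
by split; [exact: zero_graph_C2s_not_C2w hm | exact: det_graph_C2w_not_C2s hm].
Qed.
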